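(* Let $d$ be an odd integer. Then $U=\{(0,0)\}\cup\{(e,f)\in\mathcal{B}\mid f=d\}$ is avoidable.
   Context: The bicyclic inverse semigroup is $\mathcal{B}=\{(a,b)\in\mathbb{Z}\times\mathbb{Z}\mid a\ge 0,\ a+b\ge 0\}$ with multiplication $(a,b)(c,d)=(\max\{c+d,a\}-d,\ b+d)$. A subset $U\subseteq\mathcal{B}$ is called avoidable if $\mathcal{B}$ can be partitioned into two subsets $A$ and $B$ such that no element of $U$ can be written as a product $xy$ of two distinct elements $x\neq y$ both in $A$, or both in $B$. *)

From Stdlib Require Import ZArith.
Open Scope Z_scope.

(* The bicyclic inverse semigroup B = {(a,b) in Z x Z | a >= 0, a + b >= 0}. *)
Definition inB (x : Z * Z) : Prop := 0 <= fst x /\ 0 <= fst x + snd x.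

Definition bmul (x y : Z * Z) : Z * Z :=
  (Z.max (fst y + snd y) (fst x) - snd y, snd x + snd y).

Definition avoidable (U : Z * Z -> Prop) : Prop :=
  exists A : Z * Z -> Prop,
    forall x y : Z * Z, inB x -> inB y -> x <> y ->
      U (bmul x y) ->
      ~ ((A x /\ A y) \/ (~ A x /\ ~ A y)).

(** The colouring depends only on the second coordinate [b], i.e. on the
    [Z]-component of the semigroup.  A product lies in [U] exactly when the two
    second coordinates sum to [d], or when the factors are [(e,-e)] and [(0,e)]
    with [e > 0].  Colour [b] by the parity of [b] twisted by a function
    [level b] that is symmetric under [b |-> d - b] and whose parity flips
    under [a |-> a + d] for [a > 0]: since [d] is odd, [b] and [d - b] have
    opposite parities, and [-e], [e] get opposite colours because
    [level (-e) = level (e + d)]. *)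

From Stdlib Require Import ZArith Lia Bool.
Open Scope Z_scope.

Lemma div_abs_sub_pos (D a : Z) : 0 < D -> 0 < a ->
  (Z.abs (2 * a - D) + D) / (2 * D) = a / D.
Proof.
  intros HD Ha.
  destruct (Z_le_gt_dec D (2 * a)).
  - rewrite Z.abs_eq by lia.
    replace (2 * a - D + D) with (2 * a) by lia.
    now rewrite Z.div_mul_cancel_l by lia.
  - rewrite Z.abs_neq by lia.
    rewrite !Z.div_small by lia.
    reflexivity.
Qed.

Lemma div_abs_add_pos (D a : Z) : 0 < D -> 0 < a ->
  (Z.abs (2 * a + D) + D) / (2 * D) = a / D + 1.
Proof.
  intros HD Ha.
  rewrite Z.abs_eq by lia.
  replace (2 * a + D + D) with (2 * (a + 1 * D)) by lia.
  rewrite Z.div_mul_cancel_l, Z.div_add by lia.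
  reflexivity.
Qed.

(* Numbers the blocks of [|d|] consecutive integers on either side of the
   centre [d/2]: it depends only on [|2b - d|], and moving [a > 0] by [d] moves
   it to the adjacent block. *)
Definition level (d b : Z) : Z :=
  (Z.abs (2 * b - d) + Z.abs d) / (2 * Z.abs d).

Lemma level_reflect (d b : Z) : level d (d - b) = level d b.
Proof.
  unfold level.
  now replace (2 * (d - b) - d) with (- (2 * b - d)) by lia; rewrite Z.abs_opp.
Qed.

Lemma level_add_period (d a : Z) : d <> 0 -> 0 < a ->
  level d (a + d) = level d a + 1 \/ level d a = level d (a + d) + 1.
Proof.
  intros Hd Ha. unfold level.
  replace (2 * (a + d) - d) with (2 * a + d) by lia.
  destruct (Z.lt_ge_cases d 0) as [Hneg | Hpos].
  - right. rewrite (Z.abs_neq d) by lia.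
    replace (2 * a + d) with (2 * a - - d) by lia.
    replace (2 * a - d) with (2 * a + - d) by lia.
    rewrite div_abs_add_pos, div_abs_sub_pos by lia.
    reflexivity.
  - left. rewrite (Z.abs_eq d) by lia.
    now rewrite div_abs_add_pos, div_abs_sub_pos by lia.
Qed.

Lemma odd_level_add_period (d a : Z) : d <> 0 -> 0 < a ->
  Z.odd (level d (a + d)) = negb (Z.odd (level d a)).
Proof.
  intros Hd Ha.
  destruct (level_add_period d a Hd Ha) as [-> | ->]; rewrite Z.odd_add;
    destruct (Z.odd _); reflexivity.
Qed.

Definition colour (d b : Z) : bool := xorb (Z.odd b) (Z.odd (level d b)).

Lemma colour_reflect (d b : Z) : Z.odd d = true ->
  colour d (d - b) = negb (colour d b).
Proof.
  intros Hodd. unfold colour.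
  rewrite level_reflect, Z.odd_sub, Hodd.
  now destruct (Z.odd b), (Z.odd (level d b)).
Qed.

Lemma colour_opp (d e : Z) : d <> 0 -> 0 < e ->
  colour d (- e) = negb (colour d e).
Proof.
  intros Hd He. unfold colour.
  rewrite <- (level_reflect d (- e)), Z.sub_opp_r, Z.add_comm.
  rewrite odd_level_add_period, Z.odd_opp by assumption.
  now destruct (Z.odd e), (Z.odd (level d e)).
Qed.

Lemma bmul_eq_zero (x y : Z * Z) : inB x -> inB y -> x <> y ->
  bmul x y = (0, 0) -> exists e, 0 < e /\ x = (e, - e) /\ y = (0, e).
Proof.
  destruct x as [a b], y as [c e]; unfold inB, bmul; simpl.
  intros Hx Hy Hne Hxy. injection Hxy as Hfst Hsnd.
  assert (c = 0 /\ a = e /\ b = - e) as (-> & -> & ->) by lia.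
  exists e; repeat split.
  destruct (Z.eq_dec e 0) as [-> | He]; [now contradiction Hne | lia].
Qed.

Lemma not_same_class (A : Z * Z -> bool) (x y : Z * Z) : A x <> A y ->
  ~ ((A x = true /\ A y = true) \/ (A x <> true /\ A y <> true)).
Proof. destruct (A x), (A y); intuition congruence. Qed.

Theorem proposition6p2 (d : Z) (hd : Z.odd d = true) :
  avoidable (fun u => u = (0, 0) \/ (inB u /\ snd u = d)).
Proof.
  assert (Hd : d <> 0) by (intros ->; discriminate).
  exists (fun x => colour d (snd x) = true).
  intros x y Hx Hy Hne [Hzero | [_ Hsnd]];
    apply (not_same_class (fun z => colour d (snd z))); simpl.
  - destruct (bmul_eq_zero x y Hx Hy Hne Hzero) as (e & He & -> & ->); simpl.
    rewrite colour_opp by assumption.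
    now destruct (colour d e).
  - simpl in Hsnd.
    replace (snd y) with (d - snd x) by lia.
    rewrite colour_reflect by assumption.
    now destruct (colour d (snd x)).
Qed.
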